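(* $\displaystyle\min_{\underline y\in\mathcal F}\sum_{j\in\tilde R}c_jy_j\le\min_{\underline x\in\mathcal F_0}\sum_{j\in\tilde R}c_jx_j$.
   Context: Let $G=(V,E)$ be a finite undirected graph with $V=Q\cup R\cup B$ (pairwise disjoint), where $Q$ is the set of sources, $R$ the set of potential relay locations and $B$ the set of potential sink locations; let $h_{\max}$ be a positive integer and $c_s,c_r\ge0$. Form the augmented graph $\tilde G=(\tilde V,\tilde E)$ with $\tilde V=V\cup\{0\}$, where $0$ is a new vertex (virtual sink), and $\tilde E=E\cup\{\{0,b\}:b\in B\}$. Let $\tilde R=R\cup B$ with node costs $c_j=c_r$ for $j\in R$ and $c_j=c_s$ for $j\in B$. For a source $k\in Q$, a node cut for $k$ is a set $\gamma\subseteq\tilde V\setminus\{k,0\}$ whose deletion disconnects $k$ from $0$ in $\tilde G$; it is minimal if no proper subset is a node cut; $\Gamma^k$ denotes the set of minimal node cuts for $k$. A vector $\underline y=((y_{j,k})_{k\in Q,\,j\in\tilde V\setminus\{k,0\}},(y_j)_{j\in\tilde R})$ belongs to $\mathcal F$ iff: (i) $\sum_{j\in\gamma}y_{j,k}\ge1$ for all $\gamma\in\Gamma^k$, $k\in Q$; (ii) $y_j\ge y_{j,k}$ for all $j\in\tilde R$, $k\in Q$; (iii) $\sum_{j\in\tilde V\setminus\{k,0\}}y_{j,k}\le h_{\max}$ for all $k\in Q$; (iv) all $y_{j,k},y_j\in\{0,1\}$. For $k\in Q$ let $\mathcal P'_k$ be the set of paths in $\tilde G$ from $k$ to $0$ with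 at most $h_{\max}+1$ edges, and let $\mathcal U_0$ be the set of tuples $\underline g=(p_k)_{k\in Q}$ with $p_k\in\mathcal P'_k$. For $\underline g\in\mathcal U_0$ define $\underline x(\underline g)$ by $x_{j,k}=1$ if $j$ is a vertex of $p_k$ and $0$ otherwise ($k\in Q$, $j\in\tilde V\setminus\{k,0\}$), and $x_j=1$ if $x_{j,k}=1$ for some $k\in Q$ and $0$ otherwise ($j\in\tilde R$). Let $\mathcal F_0=\{\underline x(\underline g):\underline g\in\mathcal U_0\}$. A minimum over an empty set is taken to be $+\infty$. (The right-hand side is the optimum cost of the multi-sink relay placement problem with hop bound $h_{\max}$; the left-hand side is the optimum of the node-cut ILP.) *)

From mathcomp Require Import all_boot all_order all_algebra.
From mathcomp Require Import boolp constructive_ereal.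
Set Implicit Arguments. Unset Strict Implicit. Unset Printing Implicit Defensive.
Import Order.TTheory GRing.Theory Num.Theory.

(* Vertices of the augmented graph are [option T]:
   [Some v] is the original vertex v, [None] is the virtual sink 0. *)

Definition aug_edge (T : finType) (e : rel T) (B : {set T}) : rel (option T) :=
  fun u v =>
    match u, v with
    | Some a, Some b => e a b
    | Some a, None => a \in B
    | None, Some b => b \in B
    | None, None => false
    end.

Definition Rtilde (T : finType) (R B : {set T}) : {set option T} :=
  [set j | if j is Some v then (v \in R) || (v \in B) else false].

Definition cost_node (T : finType) (Rt : realDomainType) (R : {set T})
  (cs cr : Rt) (j : option T) : Rt :=
  if j is Some v then (if v \in R then cr else cs) else 0.

Definition is_node_cut (T : finType) (e : rel T) (B : {set T}) (k : T)
  (gamma : {set option T}) : bool :=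
  (gamma \subset ~: [set Some k; None]) &&
  ~~ connect [rel u v | aug_edge e B u v && (u \notin gamma) && (v \notin gamma)]
       (Some k) None.

Definition is_min_node_cut (T : finType) (e : rel T) (B : {set T}) (k : T)
  (gamma : {set option T}) : bool :=
  is_node_cut e B k gamma &&
  [forall g' : {set option T}, (g' \proper gamma) ==> ~~ is_node_cut e B k g'].

(* The first component, indexed by pairs (k, j),
   stores y_{j,k}; the second stores y_j.  Coordinates outside the index set
   of the paper (k ∉ Q, j ∈ {k,0}; resp. j ∉ ~R) are required to be 0, so
   that vectors correspond bijectively to the paper's vectors. *)
Definition vec (T : finType) : finType :=
  ({ffun T * option T -> bool} * {ffun option T -> bool})%type.

Definition yk (T : finType) (y : vec T) (j : option T) (k : T) : bool := y.1 (k, j).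
Definition yr (T : finType) (y : vec T) (j : option T) : bool := y.2 j.

Definition idx (T : finType) (k : T) : {set option T} := ~: [set Some k; None].

Definition well_indexed (T : finType) (Q R B : {set T}) (y : vec T) : bool :=
  [forall k : T, forall j : option T,
     ((k \notin Q) || (j \notin idx k)) ==> ~~ yk y j k] &&
  [forall j : option T, (j \notin Rtilde R B) ==> ~~ yr y j].

(* the feasible set F of the node-cut ILP; (iv) is built into the type *)
Definition in_F (T : finType) (e : rel T) (Q R B : {set T}) (hmax : nat)
  (y : vec T) : bool :=
  well_indexed Q R B y &&
  [forall k in Q, forall gamma : {set option T},
     is_min_node_cut e B k gamma ==> (1 <= \sum_(j in gamma) yk y j k)%N] &&
  [forall j in Rtilde R B, forall k in Q, yk y j k ==> yr y j] &&
  [forall k in Q, (\sum_(j in idx k) yk y j k <= hmax)%N].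

Definition is_path_k (T : finType) (e : rel T) (B : {set T}) (hmax : nat)
  (k : T) (p : seq (option T)) : Prop :=
  path (aug_edge e B) (Some k) p /\ last (Some k) p = None /\
  uniq (Some k :: p) /\ (size p <= hmax.+1)%N.

Definition in_U0 (T : finType) (e : rel T) (Q B : {set T}) (hmax : nat)
  (g : T -> seq (option T)) : Prop :=
  forall k, k \in Q -> is_path_k e B hmax k (g k).

Definition x_of (T : finType) (Q R B : {set T}) (g : T -> seq (option T)) : vec T :=
  ([ffun kj : T * option T =>
      [&& kj.1 \in Q, kj.2 \in idx kj.1 & kj.2 \in (Some kj.1 :: g kj.1)]],
   [ffun j : option T =>
      (j \in Rtilde R B) && [exists k in Q, (j \in idx k) && (j \in Some k :: g k)]]).

Definition in_F0 (T : finType) (e : rel T) (Q R B : {set T}) (hmax : nat)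
  (x : vec T) : Prop :=
  exists g, in_U0 e Q B hmax g /\ x = x_of Q R B g.

Definition objective (T : finType) (Rt : realDomainType) (R B : {set T})
  (cs cr : Rt) (y : vec T) : Rt :=
  \sum_(j in Rtilde R B) (if yr y j then cost_node R cs cr j else 0).

Definition min_over (T : finType) (Rt : realDomainType) (P : pred (vec T))
  (f : vec T -> Rt) : \bar Rt :=
  \big[mine/+oo%E]_(y | P y) (f y)%:E.

From mathcomp Require Import all_boot all_order all_algebra.
From mathcomp Require Import boolp constructive_ereal.
Set Implicit Arguments. Unset Strict Implicit. Unset Printing Implicit Defensive.
Import Order.TTheory.

(* Every tuple of hop-bounded paths yields a feasible point of the node-cut
   ILP: a path from k to 0 meets every node cut for k, it has at most hmax
   inner vertices, and x_j is by construction the union of the x_{j,k}.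
   Hence F_0 is a subset of F, and a minimum over a larger set is smaller. *)

Lemma min_over_sub (T : finType) (Rt : realDomainType) (P P0 : pred (vec T))
  (f : vec T -> Rt) : (forall y, P0 y -> P y) ->
  (min_over P f <= min_over P0 f)%E.
Proof.
move=> subP0P; rewrite /min_over.
set m := \big[mine/+oo%E]_(y | P y) (f y)%:E.
have m_le y : P0 y -> (m <= (f y)%:E)%E.
  by move=> P0y; rewrite /m (bigD1 y) ?subP0P //= ge_min lexx.
apply: (big_rec (fun a => (m <= a)%E)) => [|y a P0y m_le_a]; first exact: leey.
by rewrite le_min m_le_a m_le.
Qed.

Lemma path_avoiding (V : eqType) (r : rel V) (gamma : pred V) x p :
  path r x p -> all (predC gamma) (x :: p) ->
  path [rel u v | r u v && ~~ gamma u && ~~ gamma v] x p.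
Proof.
elim: p x => [//|y p IHp] x /= /andP[rxy r_p] /and3P[nx ny n_p].
by rewrite rxy nx ny /= IHp //= ny.
Qed.

Section PathsOfATuple.

Variables (T : finType) (e : rel T) (Q R B : {set T}) (hmax : nat).

Lemma node_cut_meets_path k gamma p :
  is_node_cut e B k gamma -> is_path_k e B hmax k p ->
  exists2 j, j \in gamma & j \in Some k :: p.
Proof.
move=> /andP[_ disconnected] [kp [p_end _]].
apply/exists_inP; apply: contraNT disconnected => /exists_inPn avoid.
apply/connectP; exists p; last by rewrite p_end.
apply: path_avoiding => //; apply/allP => j jp /=.
by apply: contraTN jp => /avoid.
Qed.

Lemma path_inner_vertices k p : is_path_k e B hmax k p ->
  (#|[pred j in idx k | j \in Some k :: p]| <= hmax)%N.
Proof.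
move=> [kp [p_end [_ size_p]]].
have None_p : None \in p.
  by case: p p_end {kp size_p} => [//|a p] /= <-; exact: mem_last.
have inner_sub : [pred j in idx k | j \in Some k :: p] \subset [predD1 p & None].
  apply/subsetP => j; rewrite !inE negb_or => /andP[/andP[/negbTE-> nN]] /=.
  by rewrite nN.
apply: leq_trans (subset_leq_card inner_sub) _.
have := card_size p; rewrite (cardD1 None) None_p add1n => card_p.
by rewrite -ltnS; apply: leq_trans card_p size_p.
Qed.

Variable g : T -> seq (option T).

Lemma yk_x_of j k :
  yk (x_of Q R B g) j k = [&& k \in Q, j \in idx k & j \in Some k :: g k].
Proof. by rewrite /yk ffunE. Qed.

Lemma yr_x_of j :
  yr (x_of Q R B g) j =
  (j \in Rtilde R B) && [exists k in Q, (j \in idx k) && (j \in Some k :: g k)].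
Proof. by rewrite /yr ffunE. Qed.

Lemma x_of_well_indexed : well_indexed Q R B (x_of Q R B g).
Proof.
apply/andP; split.
  apply/forallP => k; apply/forallP => j; apply/implyP.
  by rewrite yk_x_of; case: (k \in Q) (j \in idx k) => [] [].
by apply/forallP => j; apply/implyP; rewrite yr_x_of => /negbTE->.
Qed.

Hypothesis gU0 : in_U0 e Q B hmax g.

Lemma x_of_covers_min_cuts :
  [forall k in Q, forall gamma : {set option T},
     is_min_node_cut e B k gamma ==>
     (1 <= \sum_(j in gamma) yk (x_of Q R B g) j k)%N].
Proof.
apply/forall_inP => k kQ; apply/forallP => gamma.
apply/implyP => /andP[cut _]; have /andP[gamma_idx _] := cut.
have [j jgamma jp] := node_cut_meets_path cut (gU0 kQ).
by rewrite (bigD1 j) //= yk_x_of kQ jp (subsetP gamma_idx j jgamma).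
Qed.

Lemma x_of_linking :
  [forall j in Rtilde R B, forall k in Q,
     yk (x_of Q R B g) j k ==> yr (x_of Q R B g) j].
Proof.
apply/forall_inP => j jR; apply/forall_inP => k kQ; apply/implyP.
rewrite yk_x_of yr_x_of jR kQ /= => jkp.
by apply/exists_inP; exists k.
Qed.

Lemma x_of_hop_bound :
  [forall k in Q, (\sum_(j in idx k) yk (x_of Q R B g) j k <= hmax)%N].
Proof.
apply/forall_inP => k kQ.
have -> : \sum_(j in idx k) yk (x_of Q R B g) j k =
          \sum_(j in idx k | j \in Some k :: g k) 1.
  by rewrite big_mkcondr; apply: eq_bigr => j jk; rewrite yk_x_of kQ jk; case: ifP.
by rewrite sum1_card; apply: path_inner_vertices; exact: gU0.
Qed.

End PathsOfATuple.

Lemma F0_sub_F (T : finType) (e : rel T) (Q R B : {set T}) (hmax : nat) x :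
  in_F0 e Q R B hmax x -> in_F e Q R B hmax x.
Proof.
move=> [g [gU0 ->]].
apply/andP; split; [apply/andP; split; [apply/andP; split|]|].
- exact: x_of_well_indexed.
- exact: x_of_covers_min_cuts gU0.
- exact: x_of_linking.
- exact: x_of_hop_bound gU0.
Qed.

Theorem corollary2 (Rt : realFieldType) (T : finType) (e : rel T)
  (Q R B : {set T}) (hmax : nat) (cs cr : Rt)
  (e_sym : symmetric e)
  (QR : [disjoint Q & R]) (QB : [disjoint Q & B]) (RB : [disjoint R & B])
  (cover : Q :|: R :|: B = [set: T])
  (hpos : (0 < hmax)%N) (cs_ge0 : (0 <= cs)%R) (cr_ge0 : (0 <= cr)%R) :
  (min_over (in_F e Q R B hmax) (objective R B cs cr)
   <= min_over (fun x => `[< in_F0 e Q R B hmax x >]) (objective R B cs cr))%E.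
Proof. by apply: min_over_sub => x /asboolP; exact: F0_sub_F. Qed.
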